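(* Let $(W_i,\partial_i)_i$, $(\widehat W_i,\widehat\partial_i)_i$ and $(V_i,d_i)_i$ be complexes of real vector spaces, and for each $i$ let $E_{W_i}:\widehat W_i\to W_i$, $\widehat R_{W_i}:W_i\to\widehat W_i$, $\mathcal{E}_i:W_i\to V_i$, $\mathcal{R}_i:V_i\to W_i$ be linear maps satisfying: (A1) $\widehat R_{W_i}E_{W_i}$ restricted to $\ker\widehat\partial_i$ is the identity of $\ker\widehat\partial_i$; (A2) $(E_{W_{i+1}}\widehat R_{W_{i+1}}-\mathrm{Id}_{W_{i+1}})(\ker\partial_{i+1})\subset\operatorname{Im}\partial_i$; (A3) $\widehat R_{W_{i+1}}\partial_i=\widehat\partial_i\widehat R_{W_i}$ and $E_{W_{i+1}}\widehat\partial_i=\partial_iE_{W_i}$; (B1) $\mathcal{R}_i\mathcal{E}_i=\mathrm{Id}_{W_i}$; (B2) $(\mathcal{E}_{i+1}\mathcal{R}_{i+1}-\mathrm{Id}_{V_{i+1}})(\ker d_{i+1})\subset\operatorname{Im}d_i$; (B3) $\mathcal{R}_{i+1}d_i=\partial_i\mathcal{R}_i$ and $\mathcal{E}_{i+1}\partial_i=d_i\mathcal{E}_i$. Let $\widehat V_i$, $\widehat d_i$, $E_{V_i}$, $\widehat R_{V_i}$ be as defined in the context. Then, for all $i$: (i) $\widehat R_{V_i}E_{V_i}$ restricted to $\ker\widehat d_i$ is the identity of $\ker\widehat d_i$; (ii) $(E_{V_{i+1}}\widehat R_{V_{i+1}}-\mathrm{Id}_{V_{i+1}})(\ker d_{i+1})\subset\operatorname{Im}d_i$;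 (iii) $\widehat R_{V_{i+1}}d_i=\widehat d_i\widehat R_{V_i}$ and $E_{V_{i+1}}\widehat d_i=d_iE_{V_i}$.
   Context: A complex $(W_i,\partial_i)_i$ is a sequence of vector spaces indexed by integers with linear maps $\partial_i:W_i\to W_{i+1}$, $\partial_{i+1}\partial_i=0$. Set $C_i\coloneq\ker\mathcal{R}_i\subset V_i$. Under (B1), every $v\in V_i$ can be written uniquely as $v=\mathcal{E}_iv_w+v_c$ with $v_w\in W_i$, $v_c\in C_i$; define $\Pi_{C_i}v\coloneq v_c$. Define $\widehat V_i\coloneq\widehat W_i\times C_i$, with elements $\widehat v=(\widehat v_w,\widehat v_c)$, and $\widehat d_i:\widehat V_i\to\widehat V_{i+1}$ by $\widehat d_i(\widehat v_w,\widehat v_c)\coloneq(\widehat\partial_i\widehat v_w,d_i\widehat v_c)$ (well defined since $d_iC_i\subset C_{i+1}$ under (B3)). Define $E_{V_i}:\widehat V_i\to V_i$ by $E_{V_i}(\widehat v_w,\widehat v_c)\coloneq\mathcal{E}_iE_{W_i}\widehat v_w+\widehat v_c$ and $\widehat R_{V_i}:V_i\to\widehat V_i$ by $\widehat R_{V_i}v\coloneq(\widehat R_{W_i}\mathcal{R}_iv,\Pi_{C_i}v)$. *)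

From HB Require Import structures.
From mathcomp Require Import all_boot all_order all_algebra.
From mathcomp Require Import reals.
Set Implicit Arguments. Unset Strict Implicit. Unset Printing Implicit Defensive.
Import Order.TTheory GRing.Theory Num.Theory.
Local Open Scope ring_scope.

Definition is_complex (R : realType) (X : int -> lmodType R)
  (dX : forall i : int, {linear X i -> X (i + 1)}) : Prop :=
  forall (i : int) (x : X i), dX (i + 1) (dX i x) = 0.

Section Construction.
Variables (R : realType) (W Wh V : int -> lmodType R).
Variables (dW : forall i : int, {linear W i -> W (i + 1)})
          (dWh : forall i : int, {linear Wh i -> Wh (i + 1)})
          (dV : forall i : int, {linear V i -> V (i + 1)}).
Variables (EW : forall i : int, {linear Wh i -> W i})
          (RW : forall i : int, {linear W i -> Wh i})
          (Ecal : forall i : int, {linear W i -> V i})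
          (Rcal : forall i : int, {linear V i -> W i}).

Definition inC (i : int) (c : V i) : Prop := Rcal i c = 0.

(* Under (B1), v = Ecal (Rcal v) + (v - Ecal (Rcal v)) is the unique
   decomposition v = Ecal v_w + v_c with v_c in C_i, so Pi_C v = v_c is: *)
Definition PiC (i : int) (v : V i) : V i := v - Ecal i (Rcal i v).

(* hat V_i = hat W_i x C_i, represented as pairs (w, c) in hat W_i x V_i
   with c in C_i (the side condition inC is imposed in the statement). *)
Definition hatV (i : int) : Type := (Wh i * V i)%type.

Definition dhat (i : int) (p : hatV i) : hatV (i + 1) :=
  (dWh i p.1, dV i p.2).

Definition EV (i : int) (p : hatV i) : V i := Ecal i (EW i p.1) + p.2.

Definition RVhat (i : int) (v : V i) : hatV i := (RW i (Rcal i v), PiC v).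

End Construction.

From HB Require Import structures.
From mathcomp Require Import all_boot all_order all_algebra.
From mathcomp Require Import reals.
Import Order.TTheory GRing.Theory Num.Theory.
Local Open Scope ring_scope.

(* Since [v = Ecal (Rcal v) + PiC v], the error [EV (RVhat v) - v] is
   [Ecal] applied to the error [EW (RW x) - x] of the W-level maps at
   [x = Rcal v]; as [Rcal] and [Ecal] are chain maps, a primitive of the
   latter, which exists by (A2) since [Rcal] maps cycles to cycles, is
   carried by [Ecal] to a primitive of the former.  (B1) makes
   [RVhat (EV (w, c)) = (RW (EW w), c)] for [c] in [C], so (i) follows
   from (A1); (iii) holds componentwise. *)

Section ExtendedComplex.

Context {R : realType} {W Wh V : int -> lmodType R}.
Context {dW : forall i : int, {linear W i -> W (i + 1)}}
        {dWh : forall i : int, {linear Wh i -> Wh (i + 1)}}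
        {dV : forall i : int, {linear V i -> V (i + 1)}}.
Context {EW : forall i : int, {linear Wh i -> W i}}
        {RW : forall i : int, {linear W i -> Wh i}}
        {Ecal : forall i : int, {linear W i -> V i}}
        {Rcal : forall i : int, {linear V i -> W i}}.

Hypothesis RW_dW : forall i (x : W i), RW (i + 1) (dW i x) = dWh i (RW i x).
Hypothesis EW_dWh : forall i (w : Wh i), EW (i + 1) (dWh i w) = dW i (EW i w).
Hypothesis RcalK : forall i, cancel (Ecal i) (Rcal i).
Hypothesis Rcal_dV : forall i (v : V i), Rcal (i + 1) (dV i v) = dW i (Rcal i v).
Hypothesis Ecal_dW : forall i (x : W i), Ecal (i + 1) (dW i x) = dV i (Ecal i x).

Lemma Rcal_EV i (p : hatV Wh V i) :
  inC Rcal p.2 -> Rcal i (EV EW Ecal p) = EW i p.1.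
Proof. by move=> Cp; rewrite linearD /= RcalK Cp addr0. Qed.

Lemma PiC_EV i (p : hatV Wh V i) :
  inC Rcal p.2 -> PiC Ecal Rcal (EV EW Ecal p) = p.2.
Proof. by move=> Cp; rewrite /PiC Rcal_EV // addrC addKr. Qed.

Lemma RVhat_EV i (p : hatV Wh V i) : inC Rcal p.2 ->
  RVhat RW Ecal Rcal (EV EW Ecal p) = (RW i (EW i p.1), p.2).
Proof. by move=> Cp; rewrite /RVhat Rcal_EV // PiC_EV. Qed.

Lemma RVhat_EV_ker i (p : hatV Wh V i) :
  (forall w : Wh i, dWh i w = 0 -> RW i (EW i w) = w) ->
  inC Rcal p.2 -> dhat dWh dV p = 0 -> RVhat RW Ecal Rcal (EV EW Ecal p) = p.
Proof.
case: p => w c RWEW_ker Cp /(congr1 fst) /= dw0.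
by rewrite RVhat_EV // RWEW_ker.
Qed.

Lemma EV_RVhat_subr i (v : V i) :
  EV EW Ecal (RVhat RW Ecal Rcal v) - v
  = Ecal i (EW i (RW i (Rcal i v)) - Rcal i v).
Proof. by rewrite /EV /PiC /= linearB addrA addrAC addrK. Qed.

Lemma EV_RVhat_homotopic i (v : V (i + 1)) :
  (forall x : W (i + 1), dW (i + 1) x = 0 ->
     exists y : W i, EW (i + 1) (RW (i + 1) x) - x = dW i y) ->
  dV (i + 1) v = 0 ->
  exists u : V i, EV EW Ecal (RVhat RW Ecal Rcal v) - v = dV i u.
Proof.
move=> EWRW_homotopic dv0.
have dRv0 : dW (i + 1) (Rcal (i + 1) v) = 0 by rewrite -Rcal_dV dv0 linear0.
have [y EWRW_y] := EWRW_homotopic _ dRv0.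
by exists (Ecal i y); rewrite EV_RVhat_subr EWRW_y Ecal_dW.
Qed.

Lemma RVhat_dV i (v : V i) :
  RVhat RW Ecal Rcal (dV i v) = dhat dWh dV (RVhat RW Ecal Rcal v).
Proof. by rewrite /RVhat /dhat /PiC /= Rcal_dV RW_dW Ecal_dW linearB. Qed.

Lemma EV_dhat i (p : hatV Wh V i) :
  EV EW Ecal (dhat dWh dV p) = dV i (EV EW Ecal p).
Proof. by rewrite /EV /dhat /= EW_dWh Ecal_dW linearD. Qed.

End ExtendedComplex.

Theorem theorem7 (R : realType) (W Wh V : int -> lmodType R)
  (dW : forall i : int, {linear W i -> W (i + 1)})
  (dWh : forall i : int, {linear Wh i -> Wh (i + 1)})
  (dV : forall i : int, {linear V i -> V (i + 1)})
  (EW : forall i : int, {linear Wh i -> W i})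
  (RW : forall i : int, {linear W i -> Wh i})
  (Ecal : forall i : int, {linear W i -> V i})
  (Rcal : forall i : int, {linear V i -> W i})
  (cW : is_complex dW) (cWh : is_complex dWh) (cV : is_complex dV)
  (A1 : forall (i : int) (w : Wh i), dWh i w = 0 -> RW i (EW i w) = w)
  (A2 : forall (i : int) (x : W (i + 1)), dW (i + 1) x = 0 ->
          exists y : W i, EW (i + 1) (RW (i + 1) x) - x = dW i y)
  (A3 : forall i : int,
          (forall x : W i, RW (i + 1) (dW i x) = dWh i (RW i x)) /\
          (forall w : Wh i, EW (i + 1) (dWh i w) = dW i (EW i w)))
  (B1 : forall (i : int) (x : W i), Rcal i (Ecal i x) = x)
  (B2 : forall (i : int) (v : V (i + 1)), dV (i + 1) v = 0 ->
          exists u : V i, Ecal (i + 1) (Rcal (i + 1) v) - v = dV i u)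
  (B3 : forall i : int,
          (forall v : V i, Rcal (i + 1) (dV i v) = dW i (Rcal i v)) /\
          (forall x : W i, Ecal (i + 1) (dW i x) = dV i (Ecal i x))) :
  forall i : int,
    (* (i) *)
    (forall (p : hatV Wh V i), inC Rcal p.2 -> dhat dWh dV p = 0 ->
        RVhat RW Ecal Rcal (EV EW Ecal p) = p) /\
    (* (ii) *)
    (forall v : V (i + 1), dV (i + 1) v = 0 ->
        exists u : V i, EV EW Ecal (RVhat RW Ecal Rcal v) - v = dV i u) /\
    (* (iii) *)
    ((forall v : V i, RVhat RW Ecal Rcal (dV i v) = dhat dWh dV (RVhat RW Ecal Rcal v)) /\
     (forall p : hatV Wh V i, inC Rcal p.2 ->
        EV EW Ecal (dhat dWh dV p) = dV i (EV EW Ecal p))).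
Proof.
have RW_dW i := proj1 (A3 i); have EW_dWh i := proj2 (A3 i).
have Rcal_dV i := proj1 (B3 i); have Ecal_dW i := proj2 (B3 i).
move=> i; split; [|split; [|split]].
- by move=> p; apply: (RVhat_EV_ker B1) (A1 i).
- by move=> v; apply: (EV_RVhat_homotopic Rcal_dV Ecal_dW) (A2 i).
- exact: (RVhat_dV RW_dW Rcal_dV Ecal_dW).
- by move=> p _; apply: (EV_dhat EW_dWh Ecal_dW).
Qed.
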